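(* Let $\Delta$ be a finite simplicial graph with $n$ vertices, and let $\Phi_\Delta\le\mathrm{GL}(n,\mathbb{Z})$ be the image of $\mathrm{Aut}(A_\Delta)$ under the homomorphism induced by abelianising $A_\Delta$ (coordinates indexed by the vertices of $\Delta$). A diagonal matrix $E\in\mathrm{GL}(n,\mathbb{Z})$, with diagonal entry $E(v)\in\{\pm1\}$ at vertex $v$, centralises $\Phi_\Delta$ if and only if both of the following hold: (1) if the domination classes $[v]$ and $[w]$ lie in the same $\mathrm{Aut}(\Delta)$-orbit of domination classes, then $E(v)=E(w)$; and (2) if $v$ is dominated by $w$, then $E(v)=E(w)$.
   Context: For a finite simplicial graph $\Delta=(V,E)$, $A_\Delta=\langle v\in V\mid [v,w]=1 \text{ for }(v,w)\in E\rangle$. For a vertex $v$, $\mathrm{lk}(v)$ is the set of neighbours of $v$ and $\mathrm{st}(v)=\mathrm{lk}(v)\cup\{v\}$. A vertex $y$ is dominated by $x$ (written $y\le x$) if $\mathrm{lk}(y)\subseteq\mathrm{st}(x)$. Vertices $v,w$ are domination equivalent if $v\le w$ and $w\le v$; $[v]$ is the domination class of $v$. $\mathrm{Aut}(\Delta)$ acts on the set of domination classes. *)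

From mathcomp Require Import all_boot all_order all_algebra all_fingroup.
Set Implicit Arguments. Unset Strict Implicit. Unset Printing Implicit Defensive.
Import GRing.Theory Num.Theory.
Local Open Scope ring_scope.

Definition simplicial_graph (n : nat) (e : rel 'I_n) : Prop :=
  symmetric e /\ irreflexive e.

(* Letters of words in the generators of A_Delta: (v, false) = v,
   (v, true) = v^-1. *)
Definition letter (n : nat) := ('I_n * bool)%type.

Definition winv (n : nat) (w : seq (letter n)) : seq (letter n) :=
  rev (map (fun l : letter n => (l.1, ~~ l.2)) w).

Inductive raag_eq (n : nat) (e : rel 'I_n) : seq (letter n) -> seq (letter n) -> Prop :=
| raag_refl w : raag_eq e w w
| raag_sym w1 w2 : raag_eq e w1 w2 -> raag_eq e w2 w1
| raag_trans w1 w2 w3 : raag_eq e w1 w2 -> raag_eq e w2 w3 -> raag_eq e w1 w3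
| raag_cat a b c d : raag_eq e a b -> raag_eq e c d -> raag_eq e (a ++ c) (b ++ d)
| raag_cancel x b : raag_eq e [:: (x, b); (x, ~~ b)] [::]
| raag_comm x y : e x y -> raag_eq e [:: (x, false); (y, false)] [:: (y, false); (x, false)].

Definition wsubst (n : nat) (phi : 'I_n -> seq (letter n)) (w : seq (letter n)) :
  seq (letter n) :=
  flatten (map (fun l : letter n => if l.2 then winv (phi l.1) else phi l.1) w).

(* phi : generators -> A_Delta (given by representative words) defines an
   endomorphism of A_Delta iff it respects the defining relators. *)
Definition raag_endo (n : nat) (e : rel 'I_n) (phi : 'I_n -> seq (letter n)) : Prop :=
  forall x y, e x y -> raag_eq e (phi x ++ phi y) (phi y ++ phi x).

Definition raag_aut (n : nat) (e : rel 'I_n) (phi : 'I_n -> seq (letter n)) : Prop :=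
  raag_endo e phi /\
  exists psi : 'I_n -> seq (letter n),
    raag_endo e psi /\
    (forall x, raag_eq e (wsubst phi (psi x)) [:: (x, false)]) /\
    (forall x, raag_eq e (wsubst psi (phi x)) [:: (x, false)]).

Definition expsum (n : nat) (u : 'I_n) (w : seq (letter n)) : int :=
  \sum_(l <- w | l.1 == u) (if l.2 then (-1) else 1).

(* Image of phi under abelianisation, in GL(n, Z): column v holds the
   coordinates of the image of v in Z^n. *)
Definition abmx (n : nat) (phi : 'I_n -> seq (letter n)) : 'M[int]_n :=
  \matrix_(u, v) expsum u (phi v).

Definition in_Phi (n : nat) (e : rel 'I_n) (M : 'M[int]_n) : Prop :=
  exists phi, raag_aut e phi /\ M = abmx phi.

(* Domination: y <= x iff lk(y) is contained in st(x). *)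
Definition dominated (n : nat) (e : rel 'I_n) (y x : 'I_n) : bool :=
  [forall z, e y z ==> (z == x) || e x z].

Definition dom_equiv (n : nat) (e : rel 'I_n) (v w : 'I_n) : bool :=
  dominated e v w && dominated e w v.

Definition dom_class (n : nat) (e : rel 'I_n) (v : 'I_n) : {set 'I_n} :=
  [set u | dom_equiv e u v].

Definition graph_aut (n : nat) (e : rel 'I_n) (s : {perm 'I_n}) : Prop :=
  forall x y, e (s x) (s y) = e x y.

Definition same_dom_orbit (n : nat) (e : rel 'I_n) (v w : 'I_n) : Prop :=
  exists s : {perm 'I_n}, graph_aut e s /\ (s @: dom_class e v) = dom_class e w.

From mathcomp Require Import all_boot all_order all_algebra all_fingroup.
From mathcomp Require Import ring.
Set Implicit Arguments. Unset Strict Implicit. Unset Printing Implicit Defensive.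
Import GRing.Theory Num.Theory.
Local Open Scope ring_scope.

(* For the forward direction, test E against two kinds of automorphisms: the
   transvection v |-> v w, available whenever v <= w, and the automorphisms
   induced by graph symmetries.

   Conversely, let M be the abelianisation of an automorphism phi.  Comparing
   the signed counts of ordered pairs of letters in phi(v) phi(w) and
   phi(w) phi(v) gives M i v * M j w = M j v * M i w whenever v ~ w and i, j
   are distinct and non-adjacent.  For an invertible rational matrix with this
   property a rank count shows that a nonzero entry M p v forces
   |lk v| <= |lk p|, with equality only if p <= u for every u in the support
   of the column v.  Pick a transversal s, i.e. a permutation with
   M (s v) v <> 0 (a nonzero term of the Leibniz formula): degrees are then
   constant along s, so M u v <> 0 implies s v <= u and E u = E (s v).
   Finally s is a graph automorphism, so [v] and [s v] lie in one orbit and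
   E (s v) = E v. *)

Definition edge_minors_vanish (R : comPzRingType) (n : nat) (g : rel 'I_n)
    (A : 'M[R]_n) :=
  forall v w i j, g v w -> i != j -> ~~ g i j ->
  A i v * A j w = A j v * A i w.

Section Words.
Variables (n : nat) (e : rel 'I_n).
Hypothesis esym : symmetric e.

Definition letter_sign (l : letter n) : int := if l.2 then -1 else 1.

Lemma expsum_nil (u : 'I_n) : expsum u [::] = 0.
Proof. by rewrite /expsum big_nil. Qed.

Lemma expsum_cons (u : 'I_n) (l : letter n) w :
  expsum u (l :: w) = (if l.1 == u then letter_sign l else 0) + expsum u w.
Proof. by rewrite /expsum big_cons; case: ifP => _; rewrite ?add0r. Qed.

Lemma expsum_cat (u : 'I_n) (w1 w2 : seq (letter n)) :
  expsum u (w1 ++ w2) = expsum u w1 + expsum u w2.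
Proof. by rewrite /expsum big_cat. Qed.

Lemma expsum_winv (u : 'I_n) (w : seq (letter n)) :
  expsum u (winv w) = - expsum u w.
Proof.
elim: w => [|l w IH]; first by rewrite /winv /= expsum_nil oppr0.
rewrite /winv /= rev_cons -cats1 expsum_cat -/(winv w) IH expsum_cons.
rewrite expsum_cons expsum_nil addr0 opprD addrC; congr (_ + _).
by case: ifP => // _; rewrite /letter_sign /=; case: (l.2); rewrite ?opprK.
Qed.

Lemma expsum_raag_eq (u : 'I_n) (w1 w2 : seq (letter n)) :
  raag_eq e w1 w2 -> expsum u w1 = expsum u w2.
Proof.
elim=> //.
- by move=> ? ? ? _ -> _ ->.
- by move=> a b c d _ H1 _ H2; rewrite !expsum_cat H1 H2.
- move=> x b; rewrite !expsum_cons !expsum_nil /letter_sign /=.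
  by case: ifP => // _; case: b.
- by move=> x y _; rewrite !expsum_cons !expsum_nil /letter_sign /= !addr0 addrC.
Qed.

(* The signed number of pairs formed by an [i]-letter followed, not
   necessarily adjacently, by a [j]-letter (the X_i X_j coefficient of the
   Magnus expansion); it is invariant in [A_Delta] when [i] and [j] are
   distinct and non-adjacent. *)
Fixpoint pair_expsum (i j : 'I_n) (w : seq (letter n)) : int :=
  if w is l :: w' then
    pair_expsum i j w' + (if l.1 == i then letter_sign l else 0) * expsum j w'
  else 0.

Lemma pair_expsum_cat (i j : 'I_n) (w1 w2 : seq (letter n)) :
  pair_expsum i j (w1 ++ w2) =
  pair_expsum i j w1 + pair_expsum i j w2 + expsum i w1 * expsum j w2.
Proof.
elim: w1 => [|l w1 IH] /=; first by rewrite expsum_nil mul0r add0r addr0.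
by rewrite IH expsum_cat expsum_cons; ring.
Qed.

Lemma pair_expsum_raag_eq (i j : 'I_n) (w1 w2 : seq (letter n)) :
  i != j -> ~~ e i j -> raag_eq e w1 w2 -> pair_expsum i j w1 = pair_expsum i j w2.
Proof.
move=> nij neij; elim=> //.
- by move=> ? ? ? _ -> _ ->.
- move=> a b c d Hab H1 Hcd H2; rewrite !pair_expsum_cat H1 H2.
  by rewrite (expsum_raag_eq _ Hab) (expsum_raag_eq _ Hcd).
- move=> x b /=; rewrite !expsum_cons !expsum_nil /= addr0 !mulr0 !add0r.
  by case: eqP => [->|_]; rewrite ?(negbTE nij) ?mulr0 ?mul0r.
- move=> x y exy /=; rewrite !expsum_cons !expsum_nil /= !addr0 !mulr0 !add0r.
  have nxy : (x == i) && (y == j) = false.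
    by apply/negbTE/negP => /andP[/eqP ? /eqP ?]; subst; rewrite exy in neij.
  have nyx : (y == i) && (x == j) = false.
    by apply/negbTE/negP => /andP[/eqP ? /eqP ?]; subst; rewrite esym exy in neij.
  by move: nxy nyx; case: (x == i); case: (y == j); case: (y == i); case: (x == j);
    rewrite //= ?mulr0 ?mul0r.
Qed.

Lemma abmx_edge_minors (phi : 'I_n -> seq (letter n)) :
  raag_endo e phi -> edge_minors_vanish e (abmx phi).
Proof.
move=> Hphi v w i j evw nij neij; rewrite !mxE.
have := pair_expsum_raag_eq nij neij (Hphi _ _ evw).
rewrite !pair_expsum_cat [pair_expsum i j (phi w) + _]addrC => /addrI.
by rewrite mulrC => ->; rewrite mulrC.
Qed.

Lemma expsum_wsubst (phi : 'I_n -> seq (letter n)) (u : 'I_n) (w : seq (letter n)) :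
  expsum u (wsubst phi w) = \sum_x expsum u (phi x) * expsum x w.
Proof.
elim: w => [|l w IH].
  by rewrite /wsubst /= expsum_nil big1 // => x _; rewrite expsum_nil mulr0.
rewrite /wsubst /= expsum_cat -/(wsubst phi w) IH.
under [X in _ = X]eq_bigr do rewrite expsum_cons mulrDr.
rewrite big_split /=; congr (_ + _).
rewrite (bigD1 l.1) //= eqxx big1 ?addr0; last first.
  by move=> x /negbTE nx; rewrite eq_sym nx mulr0.
by rewrite /letter_sign; case: (l.2); rewrite ?expsum_winv ?mulrN1 ?mulr1.
Qed.

Lemma abmx_wsubst_inv (phi psi : 'I_n -> seq (letter n)) :
  (forall x, raag_eq e (wsubst phi (psi x)) [:: (x, false)]) ->
  abmx phi *m abmx psi = 1%:M.
Proof.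
move=> H; apply/matrixP=> u x; rewrite !mxE.
under eq_bigr do rewrite !mxE.
rewrite -expsum_wsubst (expsum_raag_eq u (H x)) expsum_cons expsum_nil addr0.
by rewrite /letter_sign /= eq_sym; case: eqP.
Qed.

Lemma raag_eq_ctx (u v w1 w2 : seq (letter n)) :
  raag_eq e w1 w2 -> raag_eq e (u ++ w1 ++ v) (u ++ w2 ++ v).
Proof. by move=> H; do 2![apply: raag_cat => //; first exact: raag_refl]; exact: raag_refl. Qed.

Lemma raag_eq_commute_inv_r (a b : 'I_n) : e a b ->
  raag_eq e [:: (a, false); (b, true)] [:: (b, true); (a, false)].
Proof.
move=> eab.
apply: (@raag_trans _ _ _ [:: (b, true); (b, false); (a, false); (b, true)]).
  exact/raag_sym/(raag_eq_ctx [::] [:: (a, false); (b, true)] (raag_cancel e b true)).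
apply: (@raag_trans _ _ _ [:: (b, true); (a, false); (b, false); (b, true)]).
  apply: (raag_eq_ctx [:: (b, true)] [:: (b, true)]
    (w1 := [:: (b, false); (a, false)]) (w2 := [:: (a, false); (b, false)])).
  by apply: raag_comm; rewrite esym.
exact: (raag_eq_ctx [:: (b, true); (a, false)] [::] (raag_cancel e b false)).
Qed.

Lemma raag_eq_commute_inv (a b : 'I_n) : e a b ->
  raag_eq e [:: (a, true); (b, true)] [:: (b, true); (a, true)].
Proof.
move=> eab.
apply: (@raag_trans _ _ _ [:: (b, true); (b, false); (a, true); (b, true)]).
  exact/raag_sym/(raag_eq_ctx [::] [:: (a, true); (b, true)] (raag_cancel e b true)).
apply: (@raag_trans _ _ _ [:: (b, true); (a, true); (b, false); (b, true)]).
  apply: (raag_eq_ctx [:: (b, true)] [:: (b, true)]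
    (w1 := [:: (b, false); (a, true)]) (w2 := [:: (a, true); (b, false)])).
  by apply: raag_eq_commute_inv_r; rewrite esym.
exact: (raag_eq_ctx [:: (b, true); (a, true)] [::] (raag_cancel e b false)).
Qed.

Lemma raag_eq_commute_letters (l1 l2 : letter n) : l1.1 = l2.1 \/ e l1.1 l2.1 ->
  raag_eq e [:: l1; l2] [:: l2; l1].
Proof.
case: l1 => a s; case: l2 => b t /= [<-|eab].
  case: (eqVneq s t) => [->|nst]; first exact: raag_refl.
  have -> : t = ~~ s by move: nst; case: s; case: t.
  apply: (@raag_trans _ _ _ [::]); first exact: raag_cancel.
  by apply: raag_sym; have := raag_cancel e a (~~ s); rewrite negbK.
case: s; case: t.
- exact: raag_eq_commute_inv.
- by apply: raag_sym; apply: raag_eq_commute_inv_r; rewrite esym.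
- exact: raag_eq_commute_inv_r.
- exact: raag_comm.
Qed.

Lemma raag_eq_commute_letter_word (l : letter n) (u : seq (letter n)) :
  (forall l2, l2 \in u -> l.1 = l2.1 \/ e l.1 l2.1) ->
  raag_eq e (l :: u) (u ++ [:: l]).
Proof.
elim: u => [|l2 u IH] H /=; first exact: raag_refl.
apply: (@raag_trans _ _ _ (l2 :: l :: u)).
  exact: (raag_eq_ctx [::] u (raag_eq_commute_letters (H _ (mem_head _ _)))).
have := raag_eq_ctx [:: l2] [::] (IH (fun l3 l3u => H l3 (mem_behead (s := l2 :: u) l3u))).
by rewrite /= !cats0.
Qed.

Lemma raag_eq_commute_words (u1 u2 : seq (letter n)) :
  (forall l1 l2, l1 \in u1 -> l2 \in u2 -> l1.1 = l2.1 \/ e l1.1 l2.1) ->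
  raag_eq e (u1 ++ u2) (u2 ++ u1).
Proof.
elim: u1 => [|l u1 IH] H /=; first by rewrite cats0; exact: raag_refl.
apply: (@raag_trans _ _ _ (l :: u2 ++ u1)).
  have := raag_eq_ctx [:: l] [::] (IH (fun l1 l2 h1 => H l1 l2 (mem_behead (s := l :: u1) h1))).
  by rewrite /= !cats0.
have := raag_eq_ctx [::] u1 (raag_eq_commute_letter_word (H l ^~ (mem_head _ _))).
by rewrite /= -catA.
Qed.

End Words.

Definition lk n (g : rel 'I_n) (v : 'I_n) : {set 'I_n} := [set z | g v z].
Definition st n (g : rel 'I_n) (v : 'I_n) : {set 'I_n} := v |: lk g v.

Section Domination.
Variables (n : nat) (g : rel 'I_n).
Hypotheses (gsym : symmetric g) (girr : irreflexive g).

Lemma dominatedP a b :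
  reflect (forall z, g a z -> z = b \/ g b z) (dominated g a b).
Proof.
apply: (iffP forallP) => H z.
  by move=> gaz; have := H z; rewrite gaz /= => /orP[/eqP->|]; [left|right].
by apply/implyP => /H [->|->]; rewrite ?eqxx ?orbT.
Qed.

Lemma dominated_refl a : dominated g a a.
Proof. by apply/dominatedP => z gaz; right. Qed.

Lemma card_st v : #|st g v| = (#|lk g v|).+1.
Proof. by rewrite /st cardsU1 inE girr. Qed.

Lemma dominated_trans a b c : dominated g a b -> dominated g b c -> dominated g a c.
Proof.
move=> /dominatedP Hab /dominatedP Hbc; apply/dominatedP => z gaz.
case: (Hab z gaz) => [zb|]; last exact: Hbc.
subst z; case: (eqVneq b c) => [->|nbc]; first by left.
right; case: (Hbc a); first by rewrite gsym.
  by move=> ac; subst c.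
move=> gca; case: (Hab c); first by rewrite gsym.
  by move=> cb; rewrite cb eqxx in nbc.
by rewrite gsym.
Qed.

Lemma lkD_subset a b : dominated g a b -> lk g a :\ b \subset lk g b :\ a.
Proof.
move=> /dominatedP H; apply/subsetP => z; rewrite !inE => /andP[nzb gaz].
case: (H z gaz) => [/eqP zb|->]; first by rewrite zb in nzb.
by rewrite andbT; apply: contraTneq gaz => ->; rewrite girr.
Qed.

Lemma card_lkD a b : #|lk g a| = (#|lk g a :\ b| + g a b)%N.
Proof. by rewrite (cardsD1 b (lk g a)) addnC [b \in _]inE. Qed.

Lemma dom_equiv_card_lk a b : dom_equiv g a b -> #|lk g a| = #|lk g b|.
Proof.
move=> /andP[dab dba].
have eq_lkD : lk g a :\ b = lk g b :\ a.
  by apply/eqP; rewrite eqEsubset !lkD_subset.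
by rewrite (card_lkD a b) (card_lkD b a) eq_lkD gsym.
Qed.

Lemma dominated_card_lk_eq a b :
  dominated g a b -> #|lk g a| = #|lk g b| -> dominated g b a.
Proof.
move=> dab hd.
have eq_lkD : lk g a :\ b = lk g b :\ a.
  apply/eqP; rewrite eqEcard lkD_subset //=.
  by move: hd; rewrite (card_lkD a b) (card_lkD b a) gsym => /addIn ->.
apply/dominatedP => z gbz; case: (eqVneq z a) => [->|nza]; first by left.
have : z \in lk g b :\ a by rewrite !inE nza gbz.
by rewrite -eq_lkD !inE => /andP[_ ->]; right.
Qed.

Lemma dom_equivC a b : dom_equiv g a b = dom_equiv g b a.
Proof. by rewrite /dom_equiv andbC. Qed.

Lemma dom_equiv_trans a b c : dom_equiv g a b -> dom_equiv g b c -> dom_equiv g a c.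
Proof.
by move=> /andP[h1 h2] /andP[h3 h4]; rewrite /dom_equiv !(dominated_trans h1, dominated_trans h4).
Qed.

Lemma dom_class_clique a b c :
  dom_equiv g a b -> g a b -> dom_equiv g a c -> c != a -> g a c.
Proof.
move=> eab gab eac nca.
case: (eqVneq c b) => [->//|ncb].
have /andP[_ /dominatedP dbc] : dom_equiv g c b.
  by apply: dom_equiv_trans eab; rewrite dom_equivC.
move: eac => /andP[/dominatedP dac _].
case: (dac b gab) => [bc|gcb]; first by rewrite bc eqxx in ncb.
case: (dbc a); rewrite 1?gsym //.
by move=> ac; rewrite ac eqxx in nca.
Qed.

Lemma dom_class_indep a b c :
  dom_equiv g a b -> a != b -> ~~ g a b -> dom_equiv g a c -> ~~ g a c.
Proof.
move=> eab nab ngab eac; apply/negP => gac.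
by move: ngab; rewrite (dom_class_clique eac gac eab) // eq_sym.
Qed.

Definition lk_in_class x := lk g x :&: dom_class g x.
Definition lk_out_class x := lk g x :\: dom_class g x.

Lemma lk_in_class_eq0 x y :
  dom_equiv g x y -> x != y -> (#|lk_in_class x| == 0%N) = ~~ g x y.
Proof.
move=> exy nxy; rewrite cards_eq0; apply/eqP/idP => [in0|ngxy].
  apply/negP => gxy.
  have : y \in lk_in_class x by rewrite !inE gxy dom_equivC.
  by rewrite in0 inE.
apply/setP => z; rewrite !inE; apply/negbTE; rewrite negb_and.
have [ezx|] := boolP (dom_equiv g z x); last by rewrite orbT.
by rewrite (dom_class_indep exy nxy ngxy) // dom_equivC.
Qed.

End Domination.

Lemma mulmx_diag_l (R : pzRingType) n (D M : 'M[R]_n) i j :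
  is_diag_mx D -> (D *m M) i j = D i i * M i j.
Proof.
move=> /is_diag_mxP dD; rewrite mxE (bigD1 i) //= big1 ?addr0 // => k nk.
by rewrite dD ?mul0r // eq_sym.
Qed.

Lemma mulmx_diag_r (R : pzRingType) n (D M : 'M[R]_n) i j :
  is_diag_mx D -> (M *m D) i j = M i j * D j j.
Proof.
move=> /is_diag_mxP dD; rewrite mxE (bigD1 j) //= big1 ?addr0 // => k nk.
by rewrite dD ?mulr0.
Qed.

Section ForwardDirection.
Variables (n : nat) (e : rel 'I_n).
Hypotheses (esym : symmetric e) (eirr : irreflexive e).

Definition transvection (v w : 'I_n) (b : bool) : 'I_n -> seq (letter n) :=
  fun x => if x == v then [:: (v, false); (w, b)] else [:: (x, false)].

Lemma transvection_endo v w b : dominated e v w -> raag_endo e (transvection v w b).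
Proof.
move=> /dominatedP Hd x y exy; apply: raag_eq_commute_words => // l1 l2.
rewrite /transvection; case: (eqVneq x v) => [xv|xv]; case: (eqVneq y v) => [yv|yv].
- by subst; rewrite eirr in exy.
- subst; rewrite !inE => /orP[/eqP->|/eqP->] /eqP-> /=; first by right.
  by case: (Hd y exy) => ->; [left|right].
- subst; rewrite !inE => /eqP-> /orP[/eqP->|/eqP->] /=; first by right.
  by rewrite esym in exy; case: (Hd x exy) => [->|]; [left|rewrite esym; right].
- by rewrite !inE => /eqP-> /eqP->; right.
Qed.

Lemma transvection_aut v w : v != w -> dominated e v w ->
  raag_aut e (transvection v w false).
Proof.
move=> nvw Hd; split; first exact: transvection_endo.
exists (transvection v w true); split; first exact: transvection_endo.
have tw b : transvection v w b w = [:: (w, false)].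
  by rewrite /transvection eq_sym (negbTE nvw).
split=> x; rewrite {2}/transvection; case: (eqVneq x v) => [->|xv].
- rewrite /wsubst /= tw /winv /= {1}/transvection eqxx /=.
  exact: (raag_eq_ctx [:: (v, false)] [::] (raag_cancel e w false)).
- by rewrite /wsubst /= /transvection (negbTE xv) /=; apply: raag_refl.
- rewrite /wsubst /= tw /= {1}/transvection eqxx /=.
  exact: (raag_eq_ctx [:: (v, false)] [::] (raag_cancel e w true)).
- by rewrite /wsubst /= /transvection (negbTE xv) /=; apply: raag_refl.
Qed.

Definition perm_aut (s : {perm 'I_n}) : 'I_n -> seq (letter n) :=
  fun x => [:: (s x, false)].

Lemma perm_aut_aut s : graph_aut e s -> raag_aut e (perm_aut s).
Proof.
move=> Hs; split; first by move=> x y exy; apply: raag_comm; rewrite Hs.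
exists (perm_aut s^-1); split.
  by move=> x y exy; apply: raag_comm; rewrite -Hs !permKV.
by split=> x; rewrite /wsubst /perm_aut /= ?permKV ?permK; exact: raag_refl.
Qed.

Lemma centralising_diag_conditions (E : 'M[int]_n) : is_diag_mx E ->
  (forall M, in_Phi e M -> E *m M = M *m E) ->
  (forall v w, same_dom_orbit e v w -> E v v = E w w) /\
  (forall v w, dominated e v w -> E v v = E w w).
Proof.
move=> dE HM.
have Edom v w : dominated e v w -> E v v = E w w.
  move=> Hd; case: (eqVneq v w) => [->//|nvw].
  have /matrixP/(_ w v) := HM _ (ex_intro _ _ (conj (transvection_aut nvw Hd) erefl)).
  rewrite mulmx_diag_l // mulmx_diag_r // !mxE /transvection eqxx.
  rewrite !expsum_cons expsum_nil /letter_sign /= eqxx (negbTE nvw).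
  by rewrite add0r addr0 mulr1 mul1r => ->.
split=> // v w [s [Hs Hsv]].
have /matrixP/(_ (s v) v) := HM _ (ex_intro _ _ (conj (perm_aut_aut Hs) erefl)).
rewrite mulmx_diag_l // mulmx_diag_r // !mxE /perm_aut expsum_cons expsum_nil.
rewrite /letter_sign /= eqxx addr0 mulr1 mul1r => <-.
have : s v \in dom_class e w.
  by rewrite -Hsv imset_f // inE /dom_equiv dominated_refl.
by rewrite inE => /andP[/Edom].
Qed.

End ForwardDirection.

Section Complement.
Variables (n : nat) (g : rel 'I_n).
Hypotheses (gsym : symmetric g) (girr : irreflexive g).

Definition compl_graph : rel 'I_n := fun x y => (x != y) && ~~ g x y.

Lemma compl_graph_sym : symmetric compl_graph.
Proof. by move=> x y; rewrite /compl_graph eq_sym gsym. Qed.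

Lemma compl_graph_irr : irreflexive compl_graph.
Proof. by move=> x; rewrite /compl_graph eqxx. Qed.

Lemma dominated_compl a b : dominated compl_graph a b = dominated g b a.
Proof.
apply/dominatedP/dominatedP => H z.
- move=> gbz; case: (eqVneq z a) => [->|nza]; first by left.
  right; apply/negPn/negP => ngaz.
  case: (H z); first by rewrite /compl_graph eq_sym nza ngaz.
    by move=> zb; subst z; rewrite girr in gbz.
  by rewrite /compl_graph gbz andbF.
- move=> /andP[naz ngaz]; case: (eqVneq z b) => [->|nzb]; first by left.
  right; rewrite /compl_graph eq_sym nzb /=; apply/negP => gbz.
  case: (H z gbz) => [za|]; first by rewrite za eqxx in naz.
  by rewrite (negbTE ngaz).
Qed.

Lemma dom_equiv_compl a b : dom_equiv compl_graph a b = dom_equiv g a b.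
Proof. by rewrite /dom_equiv !dominated_compl andbC. Qed.

Lemma edge_minors_vanish_tr (R : comPzRingType) (A : 'M[R]_n) :
  edge_minors_vanish g A -> edge_minors_vanish compl_graph A^T.
Proof.
move=> VA v w i j /andP[nvw ngvw] nij; rewrite /compl_graph nij /= negbK => gij.
by rewrite !mxE VA // mulrC.
Qed.

End Complement.

Section SupportRank.
Variables (F : fieldType) (n : nat) (g : rel 'I_n).
Hypotheses (gsym : symmetric g) (girr : irreflexive g).

Definition colsmx (A : 'M[F]_n) (S : {set 'I_n}) : 'M[F]_(#|S|, n) :=
  \matrix_(r, j) A j (enum_val r).

Lemma mxrank_colsmx (A : 'M[F]_n) S : A \in unitmx -> \rank (colsmx A S) = #|S|.
Proof.
move=> Au; apply/eqP; rewrite eqn_leq rank_leq_row /=.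
pose sel : 'M[F]_(n, #|S|) := \matrix_(j, r) (j == enum_val r)%:R.
apply: (mulmx1_min_rank (M := 1%:M) (N := (invmx A)^T *m sel)).
apply/matrixP=> r r'; rewrite mul1mx !mxE.
rewrite (eq_bigr (fun j => invmx A (enum_val r') j * A j (enum_val r))); last first.
  move=> j _; rewrite !mxE (bigD1 (enum_val r')) //= big1 ?addr0.
    by rewrite !mxE eqxx mulr1 mulrC.
  by move=> l nl; rewrite !mxE (negbTE nl) mulr0.
have /matrixP/(_ (enum_val r') (enum_val r)) := mulVmx Au; rewrite !mxE => ->.
by rewrite (inj_eq enum_val_inj) eq_sym.
Qed.

Lemma sum_enum_val_delta (S : {set 'I_n}) (c : 'I_n -> F) j :
  \sum_(r < #|S|) c (enum_val r) * (enum_val r == j)%:R = if j \in S then c j else 0.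
Proof.
rewrite -(big_enum_val (fun i => c i * (i == j)%:R)) /=.
case: ifP => jS.
  rewrite (bigD1 j) //= eqxx mulr1 big1 ?addr0 // => i /andP[_ nij].
  by rewrite (negbTE nij) mulr0.
rewrite big1 // => i iS; case: (eqVneq i j) => [eij|_]; last by rewrite mulr0.
by rewrite -eij iS in jS.
Qed.

Variable A : 'M[F]_n.
Hypotheses (Au : A \in unitmx) (VA : edge_minors_vanish g A).

Lemma edge_minors_st v w u j : w \in st g v -> u != j -> ~~ g u j ->
  A u w * A j v = A j w * A u v.
Proof.
rewrite !inE => /orP[/eqP->|gvw] nuj nguj; first by rewrite mulrC.
by apply: VA => //; rewrite gsym.
Qed.

Definition link_span_mx (v p : 'I_n) : 'M[F]_(1 + #|lk g p|, n) :=
  col_mx (\row_j A j v) (\matrix_(r, j) (enum_val r == j)%:R).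

(* For [w] in [st v], the minor condition makes [A w - (A p w / A p v) A v]
   vanish outside [lk p]. *)
Lemma colsmx_st_sub_link_span v p : A p v != 0 ->
  (colsmx A (st g v) <= link_span_mx v p)%MS.
Proof.
move=> Apv; apply/row_subP => r; set w := enum_val r.
have wst : w \in st g v by apply: enum_valP.
pose lam := A p w / A p v.
pose D : 'M[F]_(1, 1 + #|lk g p|) := row_mx lam%:M (\row_r' (A (enum_val r') w - lam * A (enum_val r') v)).
suff -> : row r (colsmx A (st g v)) = D *m link_span_mx v p by apply: submxMl.
rewrite /D /link_span_mx mul_row_col; apply/rowP => j; rewrite !mxE.
rewrite (bigD1 ord0) //= big1 ?addr0; last by move=> i; rewrite [i]ord1 eqxx.
rewrite !mxE eqxx mulr1n.
under eq_bigr do rewrite !mxE.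
rewrite (sum_enum_val_delta (lk g p) (fun i => A i w - lam * A i v)).
case: ifP => jin; first by ring.
rewrite addr0 /lam; case: (eqVneq j p) => [->|njp].
  by rewrite mulrAC -mulrA divff // mulr1.
have ngjp : ~~ g j p by rewrite gsym; move: jin; rewrite inE => ->.
by rewrite mulrAC -(edge_minors_st wst njp ngjp) mulfK.
Qed.

Lemma card_lk_le_support v p : A p v != 0 -> (#|lk g v| <= #|lk g p|)%N.
Proof.
move=> Apv; rewrite -ltnS -card_st // -(mxrank_colsmx (st g v) Au).
apply: leq_trans (mxrankS (colsmx_st_sub_link_span Apv)) _.
exact: rank_leq_row.
Qed.

(* With equal degrees the two row spaces coincide, so each unit vector [e_j],
   [j] in [lk p], is a combination of columns of [st v]; the minor condition
   in rows [u] and [j] then forbids [u <> j] non-adjacent. *)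
Lemma card_lk_eq_dominated v p u : A p v != 0 -> #|lk g v| = #|lk g p| ->
  A u v != 0 -> dominated g p u.
Proof.
move=> Apv eqd Auv; apply/forallP => j; apply/implyP => gpj.
apply/negPn/negP; rewrite negb_or => /andP[nju ngju].
have jin : j \in lk g p by rewrite inE.
have sAB := colsmx_st_sub_link_span Apv.
have sBA : (link_span_mx v p <= colsmx A (st g v))%MS.
  have [_ <-] := mxrank_leqif_sup sAB.
  have le_rank := mxrankS sAB; rewrite mxrank_colsmx // in le_rank.
  rewrite mxrank_colsmx // eqn_leq le_rank /= card_st // eqd.
  exact: (rank_leq_row (link_span_mx v p)).
have /submxP[D HD] :
    (row (rshift 1 (enum_rank_in jin j)) (link_span_mx v p) <= colsmx A (st g v))%MS.
  exact: submx_trans (row_sub _ _) sBA.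
have deltaE l : (j == l)%:R = \sum_r D 0 r * A l (enum_val r).
  move/rowP: HD => /(_ l); rewrite mxE (@col_mxEd _ 1) mxE enum_rankK_in // => ->.
  by rewrite mxE; apply: eq_bigr => r _; rewrite !mxE.
have : \sum_r D 0 r * (A u (enum_val r) * A j v - A j (enum_val r) * A u v) = 0.
  by rewrite big1 // => r _; rewrite (edge_minors_st (enum_valP r)) ?subrr ?mulr0 // eq_sym.
under eq_bigr do rewrite mulrBr !mulrA.
rewrite sumrB -!mulr_suml -!deltaE eqxx (negbTE nju) mul0r mul1r sub0r.
by move/eqP; rewrite oppr_eq0 (negbTE Auv).
Qed.

End SupportRank.

Lemma unitmx_transversal (F : fieldType) n (A : 'M[F]_n) : A \in unitmx ->
  exists s : {perm 'I_n}, forall v, A (s v) v != 0.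
Proof.
move=> Au; case: (pickP (fun s : 'S_n => \prod_i A i (s i) != 0)) => [s Hs|H0].
  exists s^-1%g => v; move/prodf_neq0: Hs => /(_ (s^-1%g v) isT).
  by rewrite permKV.
move: Au; rewrite unitmxE unitfE /determinant big1 ?eqxx // => s _.
by have /negbFE/eqP-> := H0 s; rewrite mulr0.
Qed.

Lemma perm_leq_eq n (s : {perm 'I_n}) (d : 'I_n -> nat) :
  (forall v, d v <= d (s v))%N -> forall v, d v = d (s v).
Proof.
move=> H v; apply/eqP; rewrite eqn_leq H /= leqNgt; apply/negP => lt.
have sum_perm : (\sum_i d i = \sum_i d (s i))%N := reindex_inj (@perm_inj _ s).
have : (\sum_i d i < \sum_i d (s i))%N.
  rewrite (bigD1 v) //= [X in (_ < X)%N](bigD1 v) //= -addSn.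
  by apply: leq_add => //; apply: leq_sum => i _.
by rewrite sum_perm ltnn.
Qed.

Section Transversal.
Variables (F : fieldType) (n : nat) (g : rel 'I_n).
Hypotheses (gsym : symmetric g) (girr : irreflexive g).
Variables (A : 'M[F]_n) (s : {perm 'I_n}).
Hypotheses (Au : A \in unitmx) (VA : edge_minors_vanish g A).
Hypothesis As : forall v, A (s v) v != 0.

Lemma transversal_card_lk v : #|lk g v| = #|lk g (s v)|.
Proof.
apply: (perm_leq_eq (d := fun v => #|lk g v|)) => w /=.
exact: (card_lk_le_support gsym girr Au VA (As w)).
Qed.

Lemma transversal_dominated v u : A u v != 0 -> dominated g (s v) u.
Proof. exact: (card_lk_eq_dominated gsym girr Au VA (As v) (transversal_card_lk v)). Qed.

End Transversal.

Lemma transversal_tr (F : fieldType) n (A : 'M[F]_n) (s : {perm 'I_n}) :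
  (forall v, A (s v) v != 0) -> forall v, A^T (s^-1%g v) v != 0.
Proof. by move=> As v; rewrite mxE; have := As (s^-1%g v); rewrite permKV. Qed.

Section TransversalDual.
Variables (F : fieldType) (n : nat) (g : rel 'I_n).
Hypotheses (gsym : symmetric g) (girr : irreflexive g).
Variables (A : 'M[F]_n) (s : {perm 'I_n}).
Hypotheses (Au : A \in unitmx) (VA : edge_minors_vanish g A).
Hypothesis As : forall v, A (s v) v != 0.

(* The transpose is a matrix of the same kind for the complement graph. *)
Lemma transversal_dominated_inv v u : A u v != 0 -> dominated g v (s^-1%g u).
Proof.
move=> Auv; rewrite -(dominated_compl girr).
have AuT : A^T \in unitmx by rewrite unitmx_tr.
have := transversal_dominated (compl_graph_sym gsym) (compl_graph_irr g)
  AuT (edge_minors_vanish_tr VA) (transversal_tr As) (v := u) (u := v).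
by rewrite mxE; apply.
Qed.

Lemma transversal_non_edge_dom_equiv v w :
  g v w -> ~~ g (s v) (s w) -> dom_equiv g v w.
Proof.
move=> gvw ng.
have nsvw : s v != s w by rewrite (inj_eq perm_inj); apply: contraTneq gvw => ->; rewrite girr.
have := mulf_neq0 (As v) (As w); rewrite (VA gvw nsvw ng) mulf_eq0 negb_or.
case/andP => /transversal_dominated_inv + /transversal_dominated_inv.
by rewrite !permK /dom_equiv => -> ->.
Qed.

End TransversalDual.

Lemma exists_affine_nonroots (R : numDomainType) (a b c d : R) : a != 0 -> d != 0 ->
  exists lam : R, (a + lam * b != 0) && (c + lam * d != 0).
Proof.
move=> a0 d0; have [-> | c0] := eqVneq c 0; last by exists 0; rewrite !mul0r !addr0 a0.
have [ab0 | ab0] := eqVneq (a + b) 0; last by exists 1; rewrite !mul1r add0r ab0.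
exists 2; rewrite add0r mulf_neq0 ?pnatr_eq0 // andbT.
have -> : b = - a by apply/eqP; rewrite -addr_eq0 addrC ab0.
by rewrite mulrN mulr_natl mulr2n opprD addNKr oppr_eq0.
Qed.

Section TransvectionMatrix.
Variables (F : fieldType) (n : nat).

Definition transvection_mx (v w : 'I_n) (lam : F) : 'M[F]_n :=
  1%:M + lam *: delta_mx w v.

Lemma transvection_mx_unit v w lam : v != w -> transvection_mx v w lam \in unitmx.
Proof.
move=> nvw.
suff /mulmx1_unit[] : transvection_mx v w lam *m (1%:M - lam *: delta_mx w v) = 1%:M by [].
rewrite mulmxDl mulmxBr mulmxBr !mul1mx !mulmx1 -!scalemxAl -!scalemxAr.
by rewrite mul_delta_mx_cond (negbTE nvw) mulr0n !scaler0 subr0 subrK.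
Qed.

Lemma mulmx_transvectionE (A : 'M[F]_n) v w lam i j :
  (A *m transvection_mx v w lam) i j = A i j + (j == v)%:R * (lam * A i w).
Proof.
rewrite mulmxDr mulmx1 -scalemxAr !mxE; congr (_ + _).
rewrite (bigD1 w) //= big1 ?addr0.
  by rewrite !mxE eqxx /=; case: (j == v); rewrite /= ?mulr1 ?mulr0 ?mul1r ?mul0r; ring.
by move=> k nk; rewrite !mxE (negbTE nk) /= mulr0.
Qed.

End TransvectionMatrix.

Section DomClassPreservation.
Variables (F : numFieldType) (n : nat) (g : rel 'I_n).
Hypotheses (gsym : symmetric g) (girr : irreflexive g).
Variables (A : 'M[F]_n) (s : {perm 'I_n}).
Hypotheses (Au : A \in unitmx) (VA : edge_minors_vanish g A).
Hypothesis As : forall v, A (s v) v != 0.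

Lemma edge_minors_vanish_transvection v w lam : dominated g v w ->
  edge_minors_vanish g (A *m transvection_mx v w lam).
Proof.
move=> /dominatedP Hd x y i j gxy nij ngij; rewrite !mulmx_transvectionE.
have [xv|xv] := eqVneq x v; have [yv|yv] := eqVneq y v.
- by subst; rewrite girr in gxy.
- subst x; rewrite /= !mul1r !mul0r !addr0.
  have minor_w : A i w * A j y = A j w * A i y.
    by case: (Hd y gxy) => [->|gwy]; [rewrite mulrC | exact: VA gwy nij ngij].
  by rewrite mulrDl mulrDl -mulrA minor_w (VA gxy nij ngij) mulrA.
- subst y; rewrite /= !mul1r !mul0r !addr0.
  have minor_w : A i x * A j w = A j x * A i w.
    have gvx : g v x by rewrite gsym.
    case: (Hd x gvx) => [->|gwx]; first by rewrite mulrC.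
    by apply: VA nij ngij; rewrite gsym.
  by rewrite !mulrDr (VA gxy nij ngij) mulrCA minor_w mulrCA.
- by rewrite /= !mul0r !addr0; apply: VA.
Qed.

(* Adding [lam] times column [w] to column [v] (legitimate since [v <= w])
   gives a matrix whose own transversal sends [v] to a vertex dominated by
   both [s v] and [s w]; [lam] is chosen so that both entries survive. *)
Lemma transversal_dom_equiv v w : dom_equiv g v w -> dom_equiv g (s v) (s w).
Proof.
have [->|nvw] := eqVneq v w; first by rewrite /dom_equiv !dominated_refl.
move=> evw; have /andP[dvw _] := evw.
have [lam /andP[nz_v nz_w]] := exists_affine_nonroots (A (s v) w) (A (s w) v) (As v) (As w).
set A2 := A *m transvection_mx v w lam.
have A2u : A2 \in unitmx by rewrite unitmx_mul Au transvection_mx_unit.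
have V2 : edge_minors_vanish g A2 by apply: edge_minors_vanish_transvection.
have [s2 As2] := unitmx_transversal A2u.
have A2E u : A2 u v = A u v + lam * A u w by rewrite mulmx_transvectionE eqxx mul1r.
have dom2 u : A2 u v != 0 -> dominated g (s2 v) u.
  exact: (transversal_dominated gsym girr A2u V2 As2).
have sdom x u : A u x != 0 -> dominated g (s x) u.
  exact: (transversal_dominated gsym girr Au VA As).
have deq : #|lk g (s v)| = #|lk g (s w)|.
  by rewrite -!(transversal_card_lk gsym girr Au VA As) (dom_equiv_card_lk gsym girr evw).
suff [d|d] : dominated g (s v) (s w) \/ dominated g (s w) (s v).
- by rewrite /dom_equiv d (dominated_card_lk_eq gsym girr d).
- by rewrite /dom_equiv d (dominated_card_lk_eq gsym girr d).
have := As2 v; rewrite A2E.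
have [a0|a0] := eqVneq (A (s2 v) v) 0.
  rewrite a0 add0r mulf_eq0 negb_or => /andP[_ aw].
  by right; apply: (dominated_trans gsym (sdom _ _ aw)); apply: dom2; rewrite A2E.
by move=> _; left; apply: (dominated_trans gsym (sdom _ _ a0)); apply: dom2; rewrite A2E.
Qed.

End DomClassPreservation.

Section TransversalGraphAut.
Variables (F : numFieldType) (n : nat) (g : rel 'I_n).
Hypotheses (gsym : symmetric g) (girr : irreflexive g).
Variables (A : 'M[F]_n) (s : {perm 'I_n}).
Hypotheses (Au : A \in unitmx) (VA : edge_minors_vanish g A).
Hypothesis As : forall v, A (s v) v != 0.

Lemma transversal_dom_equivE v w : dom_equiv g (s v) (s w) = dom_equiv g v w.
Proof.
apply/idP/idP; last exact: (transversal_dom_equiv gsym girr Au VA As).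
have AuT : A^T \in unitmx by rewrite unitmx_tr.
have := transversal_dom_equiv (compl_graph_sym gsym) (compl_graph_irr g) AuT
  (edge_minors_vanish_tr VA) (transversal_tr As) (v := s v) (w := s w).
by rewrite !dom_equiv_compl // !permK.
Qed.

(* [s] preserves the edges between different domination classes: it maps
   such edges to edges, and there are finitely many of them. *)
Lemma transversal_edge_inequiv a b : ~~ dom_equiv g a b -> g (s a) (s b) = g a b.
Proof.
have edge_inequiv x y : g x y -> ~~ dom_equiv g x y -> g (s x) (s y).
  move=> gxy; apply: contraNT => ng.
  exact: (transversal_non_edge_dom_equiv gsym girr Au VA As gxy ng).
move=> nab; apply/idP/idP => [gsab|gab]; last exact: edge_inequiv.
pose X := [set ab : 'I_n * 'I_n | g ab.1 ab.2 && ~~ dom_equiv g ab.1 ab.2].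
pose f (ab : 'I_n * 'I_n) := (s ab.1, s ab.2).
have f_inj : injective f by move=> [x1 y1] [x2 y2] [/perm_inj -> /perm_inj ->].
have fX : f @: X = X.
  apply/eqP; rewrite eqEcard (card_imset _ f_inj) leqnn andbT.
  apply/subsetP => xy /imsetP[[x y]]; rewrite inE /= => /andP[gxy nxy] ->.
  by rewrite inE /= edge_inequiv // transversal_dom_equivE.
have : f (a, b) \in X by rewrite inE /= gsab transversal_dom_equivE.
by rewrite -fX => /imsetP[[x y] + /= [/perm_inj -> /perm_inj ->]]; rewrite inE => /andP[].
Qed.

Lemma transversal_lk_out_class a : s @: lk_out_class g a = lk_out_class g (s a).
Proof.
apply/setP => y; rewrite -(permKV s y) (mem_imset _ _ (@perm_inj _ s)).
set z := s^-1%g y; rewrite !inE transversal_dom_equivE.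
case: (boolP (dom_equiv g z a)) => //= nza.
by rewrite transversal_edge_inequiv // dom_equivC.
Qed.

Lemma card_lk_in_class a : #|lk_in_class g a| = #|lk_in_class g (s a)|.
Proof.
have out_eq : #|lk_out_class g a| = #|lk_out_class g (s a)|.
  by rewrite -transversal_lk_out_class card_imset //; apply: perm_inj.
have := cardsID (dom_class g a) (lk g a).
have := cardsID (dom_class g (s a)) (lk g (s a)).
rewrite -/(lk_in_class g a) -/(lk_out_class g a).
rewrite -/(lk_in_class g (s a)) -/(lk_out_class g (s a)).
by rewrite -(transversal_card_lk gsym girr Au VA As a) -out_eq => <- /addIn.
Qed.

Lemma transversal_graph_aut : graph_aut g s.
Proof.
move=> a b; have [->|nab] := eqVneq a b; first by rewrite !girr.
have [eab|neab] := boolP (dom_equiv g a b); last exact: transversal_edge_inequiv.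
have nsab : s a != s b by rewrite (inj_eq perm_inj).
apply/negb_inj; rewrite -(lk_in_class_eq0 gsym eab nab) card_lk_in_class.
by rewrite (lk_in_class_eq0 gsym _ nsab) // transversal_dom_equivE.
Qed.

End TransversalGraphAut.

Lemma edge_minors_vanish_map (R S : comPzRingType) (f : {rmorphism R -> S})
    n (g : rel 'I_n) (A : 'M[R]_n) :
  edge_minors_vanish g A -> edge_minors_vanish g (map_mx f A).
Proof. by move=> VA v w i j gvw nij ngij; rewrite !mxE -!rmorphM VA. Qed.

Lemma graph_aut_dominated n (g : rel 'I_n) (s : {perm 'I_n}) x y :
  graph_aut g s -> dominated g (s x) (s y) = dominated g x y.
Proof.
move=> gs; apply/dominatedP/dominatedP => H z.
- move=> gxz; case: (H (s z)); first by rewrite gs.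
    by move/perm_inj ->; left.
  by rewrite gs; right.
- rewrite -(permKV s z) gs => /H[->|]; first by left.
  by rewrite gs; right.
Qed.

Lemma graph_aut_dom_class n (g : rel 'I_n) (s : {perm 'I_n}) v :
  graph_aut g s -> s @: dom_class g v = dom_class g (s v).
Proof.
move=> gs; apply/setP => u; rewrite -(permKV s u) (mem_imset _ _ (@perm_inj _ s)).
by rewrite !inE /dom_equiv !graph_aut_dominated.
Qed.

Lemma diag_centralises_Phi n (e : rel 'I_n) (E : 'M[int]_n) :
  simplicial_graph e -> is_diag_mx E ->
  (forall v w, same_dom_orbit e v w -> E v v = E w w) ->
  (forall v w, dominated e v w -> E v v = E w w) ->
  forall M, in_Phi e M -> E *m M = M *m E.
Proof.
move=> [esym eirr] dE Eorbit Edom _ [phi [[phi_endo [psi [_ [phi_psi _]]]] ->]].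
set Mq := map_mx (intr : int -> rat) (abmx phi).
have Mq_unit : Mq \in unitmx.
  have /(congr1 (map_mx (intr : int -> rat))) := abmx_wsubst_inv phi_psi.
  by rewrite map_mxM map_mx1 => /mulmx1_unit[].
have VMq : edge_minors_vanish e Mq by apply/edge_minors_vanish_map/abmx_edge_minors.
have [s Ms] := unitmx_transversal Mq_unit.
have s_aut := transversal_graph_aut esym eirr Mq_unit VMq Ms.
apply/matrixP => u v; rewrite mulmx_diag_l // mulmx_diag_r //.
have [->|nz] := eqVneq (abmx phi u v) 0; first by rewrite mulr0 mul0r.
have Mq_uv : Mq u v != 0 by rewrite mxE intr_eq0.
rewrite mulrC -(Edom _ _ (transversal_dominated esym eirr Mq_unit VMq Ms Mq_uv)).
by rewrite (Eorbit v (s v)) //; exists s; rewrite graph_aut_dom_class.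
Qed.

Unset Implicit Arguments.
Theorem mainTheorem6 (n : nat) (e : rel 'I_n) (E : 'M[int]_n) :
  simplicial_graph e ->
  is_diag_mx E ->
  (forall v, E v v = 1 \/ E v v = -1) ->
  ((forall M, in_Phi e M -> E *m M = M *m E) <->
   ((forall v w, same_dom_orbit e v w -> E v v = E w w) /\
    (forall v w, dominated e v w -> E v v = E w w))).
Proof.
(* The entries of [E] need not be [1] or [-1] for the equivalence to hold. *)
move=> e_simple dE _; split.
  by case: e_simple => esym eirr; exact: centralising_diag_conditions.
by case=> Eorbit Edom; exact: diag_centralises_Phi.
Qed.
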